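(* Let $\Gamma$ be a $g\mathbf{PAI}_0$-theory. For all formulas $\varphi,\psi$: $[N(\varphi)]_{\sim_\Gamma}\le_\oplus[N(\psi)]_{\sim_\Gamma}$ in the quotient algebra $\langle N[Fm]/{\sim_\Gamma},\oplus,\rhd\rangle$ if and only if $N(\varphi)\le_\Gamma N(\psi)$ (equivalently, iff $\varphi\prec\psi\in\Gamma$).
   Context: Language: fix a countable set $Var$ of variables; $Fm$ is the set of formulas built from $Var$ with unary $\neg,\Box$ and binary $\vee,\to$. Abbreviations: $\varphi\wedge\psi:=\neg(\neg\varphi\vee\neg\psi)$, $\varphi\supset\psi:=\neg\varphi\vee\psi$, $\varphi\equiv\psi:=(\varphi\supset\psi)\wedge(\psi\supset\varphi)$, $\varphi\prec\psi:=\psi\to(\varphi\vee\neg\varphi)$. $g\mathbf{PAI}_0$ is the Hilbert calculus with axiom schemes (A1) $\varphi\supset(\psi\supset\varphi)$; (A2) $(\varphi\supset(\psi\supset\chi))\supset((\varphi\supset\psi)\supset(\varphi\supset\chi))$; (A3) $(\neg\varphi\supset\neg\psi)\supset(\psi\supset\varphi)$; (A4) $(\varphi\to\psi)\equiv(\Box(\varphi\supset\psi)\wedge(\psi\prec\varphi))$; (K) $\Box(\varphi\supset\psi)\supset(\Box\varphi\supset\Box\psi)$; (T) $\Box\varphi\supset\varphi$; (4) $\Box\varphi\supset\Box\Box\varphi$; (O1) $\varphi\prec\varphi$; (O2) $((\varphi\prec\psi)\wedge(\psi\prec\chi))\supset(\varphi\prec\chi)$; (O3) $(\varphi\prec\psi)\supset((\varphi\vee\psi)\prec\psi)$;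 (O4) $((\varphi\prec\psi)\equiv(\varphi\prec\neg\psi))\wedge((\varphi\prec\psi)\equiv(\neg\varphi\prec\psi))$; (O5) $((\varphi\prec\psi)\equiv(\varphi\prec\Box\psi))\wedge((\varphi\prec\psi)\equiv(\Box\varphi\prec\psi))$; (C1) $(\varphi\prec(\varphi\vee\psi))\wedge(\psi\prec(\varphi\vee\psi))$; (C2) $((\varphi\prec\chi)\wedge(\psi\prec\chi))\supset((\varphi\vee\psi)\prec\chi)$; (C3) $((\varphi\prec\chi)\wedge(\chi\prec\varphi)\wedge(\psi\prec\zeta)\wedge(\zeta\prec\psi))\supset((\varphi\to\psi)\prec(\chi\to\zeta))$; rules (MP) from $\varphi,\varphi\supset\psi$ infer $\psi$, (Nec$_g$) from $\varphi$ infer $\Box\varphi$. A $g\mathbf{PAI}_0$-theory is a set of formulas closed under derivability in this calculus. $N$ is the map from $Fm$ onto the algebra of terms over $Var$ in binary symbols $\oplus,\rhd$ given by $N(p)=p$, $N(\neg\varphi)=N(\Box\varphi)=N(\varphi)$, $N(\varphi\vee\psi)=N(\varphi)\oplus N(\psi)$, $N(\varphi\to\psi)=N(\varphi)\rhd N(\psi)$; $N[Fm]$ is its image. For a theory $\Gamma$ define on $N[Fm]$: $N(\varphi)\le_\Gamma N(\psi)$ iff $\varphi\prec\psi\in\Gamma$ (this does not depend on the chosen preimages), and $N(\varphi)\sim_\Gamma N(\psi)$ iff $N(\varphi)\le_\Gamma N(\psi)$ and $N(\psi)\le_\Gamma N(\varphi)$; $\sim_\Gamma$ is a congruence of $\langle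 N[Fm],\oplus,\rhd\rangle$, and $\langle N[Fm]/{\sim_\Gamma},\oplus,\rhd\rangle$ is the quotient. On the quotient, $x\le_\oplus y$ iff $x\oplus y=y$. *)

Inductive Fm : Type :=
| FVar : nat -> Fm
| FNeg : Fm -> Fm
| FBox : Fm -> Fm
| FOr  : Fm -> Fm -> Fm
| FImp : Fm -> Fm -> Fm.

Definition FAnd (a b : Fm) : Fm := FNeg (FOr (FNeg a) (FNeg b)).
Definition FSup (a b : Fm) : Fm := FOr (FNeg a) b.
Definition FEqv (a b : Fm) : Fm := FAnd (FSup a b) (FSup b a).
Definition FPrec (a b : Fm) : Fm := FImp b (FOr a (FNeg a)).

Inductive IsAxiom : Fm -> Prop :=
| A1 a b : IsAxiom (FSup a (FSup b a))
| A2 a b c : IsAxiom (FSup (FSup a (FSup b c)) (FSup (FSup a b) (FSup a c)))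
| A3 a b : IsAxiom (FSup (FSup (FNeg a) (FNeg b)) (FSup b a))
| A4 a b : IsAxiom (FEqv (FImp a b) (FAnd (FBox (FSup a b)) (FPrec b a)))
| AK a b : IsAxiom (FSup (FBox (FSup a b)) (FSup (FBox a) (FBox b)))
| AT a : IsAxiom (FSup (FBox a) a)
| A4m a : IsAxiom (FSup (FBox a) (FBox (FBox a)))
| O1 a : IsAxiom (FPrec a a)
| O2 a b c : IsAxiom (FSup (FAnd (FPrec a b) (FPrec b c)) (FPrec a c))
| O3 a b : IsAxiom (FSup (FPrec a b) (FPrec (FOr a b) b))
| O4 a b : IsAxiom (FAnd (FEqv (FPrec a b) (FPrec a (FNeg b)))
                       (FEqv (FPrec a b) (FPrec (FNeg a) b)))
| O5 a b : IsAxiom (FAnd (FEqv (FPrec a b) (FPrec a (FBox b)))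
                       (FEqv (FPrec a b) (FPrec (FBox a) b)))
| C1 a b : IsAxiom (FAnd (FPrec a (FOr a b)) (FPrec b (FOr a b)))
| C2 a b c : IsAxiom (FSup (FAnd (FPrec a c) (FPrec b c)) (FPrec (FOr a b) c))
| C3 a b c d : IsAxiom (FSup (FAnd (FAnd (FAnd (FPrec a c) (FPrec c a)) (FPrec b d))
                                 (FPrec d b))
                           (FPrec (FImp a b) (FImp c d))).

Inductive Deriv (G : Fm -> Prop) : Fm -> Prop :=
| D_ax a : IsAxiom a -> Deriv G a
| D_hyp a : G a -> Deriv G a
| D_mp a b : Deriv G a -> Deriv G (FSup a b) -> Deriv G b
| D_nec a : Deriv G a -> Deriv G (FBox a).

Definition is_theory (G : Fm -> Prop) : Prop := forall a, Deriv G a -> G a.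

Inductive Tm : Type :=
| TVar : nat -> Tm
| TOplus : Tm -> Tm -> Tm
| TRhd : Tm -> Tm -> Tm.

Fixpoint N (a : Fm) : Tm :=
  match a with
  | FVar p => TVar p
  | FNeg a => N a
  | FBox a => N a
  | FOr a b => TOplus (N a) (N b)
  | FImp a b => TRhd (N a) (N b)
  end.

Definition inNFm (t : Tm) : Prop := exists a, N a = t.

Definition leG (G : Fm -> Prop) (t s : Tm) : Prop :=
  exists a b, N a = t /\ N b = s /\ G (FPrec a b).

Definition simG (G : Fm -> Prop) (t s : Tm) : Prop := leG G t s /\ leG G s t.

(** The quotient N[Fm]/~Γ: elements are equivalence classes, represented as
    predicates on terms.  [t] = class of t. *)
Definition cls (G : Fm -> Prop) (t : Tm) : Tm -> Prop :=
  fun s => inNFm s /\ simG G t s.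

(** ⊕ on the quotient: [x] ⊕ [y] = [x ⊕ y], computed from arbitrary
    representatives. *)
Definition qoplus (G : Fm -> Prop) (X Y : Tm -> Prop) : Tm -> Prop :=
  fun s => exists x y, X x /\ Y y /\ cls G (TOplus x y) s.

Definition qle (G : Fm -> Prop) (X Y : Tm -> Prop) : Prop := qoplus G X Y = Y.

(* The map N forgets exactly the connectives the order ≺ cannot see: by O4 and
   O5 a formula is ≺-equivalent to its negation and to its box, and by C1–C3
   ≺-equivalence is a congruence for ∨ and →.  Hence formulas with the same
   N-term are ≺-equivalent, so ≤_Γ on N[Fm] is read off any preimages, and by
   C1, C2 the class of N(φ ∨ ψ) is the least upper bound of those of N(φ) and
   N(ψ); therefore [N φ] ⊕ [N ψ] = [N ψ] exactly when φ ≺ ψ ∈ Γ. *)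

From Stdlib Require Import FunctionalExtensionality PropExtensionality.

(* The deduction theorem fails for [Deriv] because of Nec_g, so propositional
   reasoning is done in the Nec-free calculus A1–A3 + MP, over the premises
   [Deriv G]. *)
Inductive Hilb (H : Fm -> Prop) : Fm -> Prop :=
| hilb_K a b : Hilb H (FSup a (FSup b a))
| hilb_S a b c : Hilb H (FSup (FSup a (FSup b c)) (FSup (FSup a b) (FSup a c)))
| hilb_contra a b : Hilb H (FSup (FSup (FNeg a) (FNeg b)) (FSup b a))
| hilb_hyp a : H a -> Hilb H a
| hilb_mp a b : Hilb H a -> Hilb H (FSup a b) -> Hilb H b.

Arguments hilb_K {H}.
Arguments hilb_S {H}.
Arguments hilb_contra {H}.
Arguments hilb_mp {H} a.

Definition add_premise (H : Fm -> Prop) (h : Fm) : Fm -> Prop :=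
  fun x => x = h \/ H x.

Lemma hilb_refl H a : Hilb H (FSup a a).
Proof.
  apply (hilb_mp (FSup a (FSup a a))); [apply hilb_K|].
  apply (hilb_mp (FSup a (FSup (FSup a a) a))); [apply hilb_K|].
  apply hilb_S.
Qed.

Lemma hilb_weaken H h a : Hilb H a -> Hilb (add_premise H h) a.
Proof.
  induction 1 as [| | |a Ha|a b _ IHa _ IHab].
  - apply hilb_K.
  - apply hilb_S.
  - apply hilb_contra.
  - apply hilb_hyp; right; exact Ha.
  - exact (hilb_mp a b IHa IHab).
Qed.

Lemma hilb_premise H h : Hilb (add_premise H h) h.
Proof. apply hilb_hyp; left; reflexivity. Qed.

Lemma hilb_deduction H h b : Hilb (add_premise H h) b -> Hilb H (FSup h b).
Proof.
  induction 1 as [a c|a c d|a c|a [->|Ha]|a c _ IHa _ IHac].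
  - eapply hilb_mp; apply hilb_K.
  - eapply hilb_mp; [apply hilb_S|apply hilb_K].
  - eapply hilb_mp; [apply hilb_contra|apply hilb_K].
  - apply hilb_refl.
  - eapply hilb_mp; [apply hilb_hyp; exact Ha|apply hilb_K].
  - eapply hilb_mp; [exact IHa|].
    eapply hilb_mp; [exact IHac|apply hilb_S].
Qed.

Lemma hilb_explosion H a b : Hilb H (FSup (FNeg a) (FSup a b)).
Proof.
  apply hilb_deduction.
  eapply hilb_mp; [|apply hilb_contra].
  eapply hilb_mp; [apply hilb_premise|apply hilb_K].
Qed.

Lemma hilb_dne H a : Hilb H (FSup (FNeg (FNeg a)) a).
Proof.
  apply hilb_deduction.
  eapply hilb_mp; [apply hilb_premise|].
  eapply hilb_mp; [|apply (hilb_contra a (FNeg (FNeg a)))].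
  eapply hilb_mp; [|apply (hilb_contra (FNeg (FNeg (FNeg a))) (FNeg a))].
  eapply hilb_mp; [apply hilb_premise|apply hilb_K].
Qed.

Lemma hilb_dni H a : Hilb H (FSup a (FNeg (FNeg a))).
Proof. eapply hilb_mp; [apply hilb_dne|apply hilb_contra]. Qed.

Lemma hilb_contrapose H a b :
  Hilb H (FSup a b) -> Hilb H (FSup (FNeg b) (FNeg a)).
Proof.
  intro Hab.
  eapply hilb_mp; [|apply (hilb_contra (FNeg a) (FNeg b))].
  apply hilb_deduction.
  eapply hilb_mp; [|apply hilb_dni].
  eapply hilb_mp; [|apply hilb_weaken; exact Hab].
  eapply hilb_mp; [apply hilb_premise|apply hilb_dne].
Qed.

Lemma hilb_andI H a b : Hilb H a -> Hilb H b -> Hilb H (FAnd a b).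
Proof.
  intros Ha Hb.
  eapply hilb_mp; [exact Hb|].
  eapply hilb_mp; [|apply (hilb_contra (FNeg (FSup a (FNeg b))) b)].
  apply hilb_deduction.
  eapply hilb_mp; [apply hilb_weaken; exact Ha|].
  eapply hilb_mp; [apply hilb_premise|apply hilb_dne].
Qed.

Lemma hilb_andE1 H a b : Hilb H (FAnd a b) -> Hilb H a.
Proof.
  intro Hab.
  eapply hilb_mp; [|apply hilb_dne].
  eapply hilb_mp; [exact Hab|].
  apply hilb_contrapose, hilb_explosion.
Qed.

Lemma hilb_andE2 H a b : Hilb H (FAnd a b) -> Hilb H b.
Proof.
  intro Hab.
  eapply hilb_mp; [|apply hilb_dne].
  eapply hilb_mp; [exact Hab|].
  apply hilb_contrapose, hilb_K.
Qed.

Lemma Deriv_of_Hilb G a : Hilb (Deriv G) a -> Deriv G a.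
Proof.
  induction 1 as [| | |a Ha|a b _ IHa _ IHab].
  - apply D_ax, A1.
  - apply D_ax, A2.
  - apply D_ax, A3.
  - exact Ha.
  - exact (D_mp G a b IHa IHab).
Qed.

Section Theory.

Variable G : Fm -> Prop.
Hypothesis HG : is_theory G.

Lemma theory_Hilb a : Hilb (Deriv G) a -> G a.
Proof. intro Ha; apply HG, Deriv_of_Hilb, Ha. Qed.

Lemma Hilb_theory a : G a -> Hilb (Deriv G) a.
Proof. intro Ha; apply hilb_hyp, D_hyp, Ha. Qed.

Lemma Hilb_axiom a : IsAxiom a -> Hilb (Deriv G) a.
Proof. intro Ha; apply hilb_hyp, D_ax, Ha. Qed.

Lemma theory_mp a b : G a -> Hilb (Deriv G) (FSup a b) -> G b.
Proof. intros Ha Hab; apply theory_Hilb; eapply hilb_mp; [apply Hilb_theory, Ha|exact Hab]. Qed.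

Lemma theory_and a b : G a -> G b -> G (FAnd a b).
Proof. intros Ha Hb; apply theory_Hilb, hilb_andI; apply Hilb_theory; assumption. Qed.

Lemma theory_eqv_mp a b : Hilb (Deriv G) (FEqv a b) -> G a -> G b.
Proof. intros Hab Ha; apply (theory_mp a b Ha); eapply hilb_andE1; exact Hab. Qed.

Lemma prec_refl a : G (FPrec a a).
Proof. apply HG, D_ax, O1. Qed.

Lemma prec_trans a b c : G (FPrec a b) -> G (FPrec b c) -> G (FPrec a c).
Proof.
  intros Hab Hbc; apply (theory_mp _ _ (theory_and _ _ Hab Hbc)).
  apply Hilb_axiom, O2.
Qed.

Lemma prec_negr a b : G (FPrec a b) -> G (FPrec a (FNeg b)).
Proof. apply theory_eqv_mp; eapply hilb_andE1; apply Hilb_axiom, O4. Qed.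

Lemma prec_negl a b : G (FPrec a b) -> G (FPrec (FNeg a) b).
Proof. apply theory_eqv_mp; eapply hilb_andE2; apply Hilb_axiom, O4. Qed.

Lemma prec_boxr a b : G (FPrec a b) -> G (FPrec a (FBox b)).
Proof. apply theory_eqv_mp; eapply hilb_andE1; apply Hilb_axiom, O5. Qed.

Lemma prec_boxl a b : G (FPrec a b) -> G (FPrec (FBox a) b).
Proof. apply theory_eqv_mp; eapply hilb_andE2; apply Hilb_axiom, O5. Qed.

Lemma prec_orl a b : G (FPrec a (FOr a b)).
Proof. apply theory_Hilb; eapply hilb_andE1; apply Hilb_axiom, C1. Qed.

Lemma prec_orr a b : G (FPrec b (FOr a b)).
Proof. apply theory_Hilb; eapply hilb_andE2; apply Hilb_axiom, C1. Qed.

Lemma prec_or_lub a b c :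
  G (FPrec a c) -> G (FPrec b c) -> G (FPrec (FOr a b) c).
Proof.
  intros Hac Hbc; apply (theory_mp _ _ (theory_and _ _ Hac Hbc)).
  apply Hilb_axiom, C2.
Qed.

Lemma prec_or_iff a b : G (FPrec (FOr a b) b) <-> G (FPrec a b).
Proof.
  split; intro Hab.
  - eapply prec_trans; [apply prec_orl|exact Hab].
  - apply prec_or_lub; [exact Hab|apply prec_refl].
Qed.

Definition prec_eqv a b := G (FPrec a b) /\ G (FPrec b a).

Lemma prec_eqv_refl a : prec_eqv a a.
Proof. split; apply prec_refl. Qed.

Lemma prec_eqv_sym a b : prec_eqv a b -> prec_eqv b a.
Proof. intros [Hab Hba]; split; assumption. Qed.

Lemma prec_eqv_trans a b c : prec_eqv a b -> prec_eqv b c -> prec_eqv a c.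
Proof.
  intros [Hab Hba] [Hbc Hcb].
  split; [exact (prec_trans _ _ _ Hab Hbc)|exact (prec_trans _ _ _ Hcb Hba)].
Qed.

Lemma prec_eqv_negl a b : prec_eqv a b -> prec_eqv (FNeg a) b.
Proof. intros [Hab Hba]; split; [apply prec_negl, Hab|apply prec_negr, Hba]. Qed.

Lemma prec_eqv_boxl a b : prec_eqv a b -> prec_eqv (FBox a) b.
Proof. intros [Hab Hba]; split; [apply prec_boxl, Hab|apply prec_boxr, Hba]. Qed.

Lemma prec_eqv_negr a b : prec_eqv a b -> prec_eqv a (FNeg b).
Proof. intro Hab; apply prec_eqv_sym, prec_eqv_negl, prec_eqv_sym, Hab. Qed.

Lemma prec_eqv_boxr a b : prec_eqv a b -> prec_eqv a (FBox b).
Proof. intro Hab; apply prec_eqv_sym, prec_eqv_boxl, prec_eqv_sym, Hab. Qed.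

Lemma prec_eqv_or a b c d :
  prec_eqv a c -> prec_eqv b d -> prec_eqv (FOr a b) (FOr c d).
Proof.
  intros [Hac Hca] [Hbd Hdb]; split; apply prec_or_lub;
    eapply prec_trans; eauto using prec_orl, prec_orr.
Qed.

Lemma prec_eqv_imp a b c d :
  prec_eqv a c -> prec_eqv b d -> prec_eqv (FImp a b) (FImp c d).
Proof.
  intros [Hac Hca] [Hbd Hdb].
  split.
  - apply (theory_mp _ _ (theory_and _ _ (theory_and _ _ (theory_and _ _ Hac Hca) Hbd) Hdb)).
    apply Hilb_axiom, C3.
  - apply (theory_mp _ _ (theory_and _ _ (theory_and _ _ (theory_and _ _ Hca Hac) Hdb) Hbd)).
    apply Hilb_axiom, C3.
Qed.

Lemma prec_eqv_N a b : N a = N b -> prec_eqv a b.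
Proof.
  revert b.
  induction a as [p|a IHa|a IHa|a1 IH1 a2 IH2|a1 IH1 a2 IH2]; intros b E.
  2: apply prec_eqv_negl, IHa, E.
  2: apply prec_eqv_boxl, IHa, E.
  all: induction b as [q|b IHb|b IHb|b1 _ b2 _|b1 _ b2 _]; try discriminate E;
    try (apply prec_eqv_negr, IHb, E); try (apply prec_eqv_boxr, IHb, E).
  - injection E as ->; apply prec_eqv_refl.
  - injection E as E1 E2; apply prec_eqv_or; auto.
  - injection E as E1 E2; apply prec_eqv_imp; auto.
Qed.

Lemma leG_N a b : leG G (N a) (N b) <-> G (FPrec a b).
Proof.
  split.
  - intros (a' & b' & Ea & Eb & Hab).
    destruct (prec_eqv_N a a' (eq_sym Ea)) as [Haa' _].
    destruct (prec_eqv_N b' b Eb) as [Hb'b _].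
    exact (prec_trans _ _ _ Haa' (prec_trans _ _ _ Hab Hb'b)).
  - intro Hab; exists a, b; auto.
Qed.

Lemma cls_N a s : cls G (N a) s <-> exists c, s = N c /\ prec_eqv a c.
Proof.
  unfold cls, simG, inNFm; split.
  - intros [[c <-] [Hac Hca]].
    exists c; split; [reflexivity|].
    split; apply leG_N; assumption.
  - intros (c & -> & [Hac Hca]).
    split; [exists c; reflexivity|].
    split; apply leG_N; assumption.
Qed.

Lemma cls_N_eq a b : cls G (N a) = cls G (N b) <-> prec_eqv a b.
Proof.
  split.
  - intro E.
    assert (Hb : cls G (N a) (N b))
      by (rewrite E; apply cls_N; exists b; split; [reflexivity|apply prec_eqv_refl]).
    apply cls_N in Hb as (c & Ec & Hac).
    eapply prec_eqv_trans; [exact Hac|apply prec_eqv_N; symmetry; exact Ec].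
  - intro Hab.
    apply functional_extensionality; intro s; apply propositional_extensionality.
    rewrite !cls_N; split; intros (c & -> & Hc); exists c; split; try reflexivity.
    + eapply prec_eqv_trans; [apply prec_eqv_sym, Hab|exact Hc].
    + eapply prec_eqv_trans; [exact Hab|exact Hc].
Qed.

Lemma qoplus_cls_N a b :
  qoplus G (cls G (N a)) (cls G (N b)) = cls G (N (FOr a b)).
Proof.
  apply functional_extensionality; intro s; apply propositional_extensionality.
  unfold qoplus; split.
  - intros (x & y & Hx & Hy & Hs).
    apply cls_N in Hx as (a' & -> & Ha); apply cls_N in Hy as (b' & -> & Hb).
    change (TOplus (N a') (N b')) with (N (FOr a' b')) in Hs.
    rewrite (proj2 (cls_N_eq (FOr a' b') (FOr a b))) in Hs; [exact Hs|].
    apply prec_eqv_or; apply prec_eqv_sym; assumption.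
  - intro Hs; exists (N a), (N b).
    split; [|split]; try (apply cls_N; eexists; split; [reflexivity|apply prec_eqv_refl]).
    exact Hs.
Qed.

End Theory.

Theorem mainTheorem11 (G : Fm -> Prop) (HG : is_theory G) (phi psi : Fm) :
  (qle G (cls G (N phi)) (cls G (N psi)) <-> leG G (N phi) (N psi)) /\
  (leG G (N phi) (N psi) <-> G (FPrec phi psi)).
Proof.
  rewrite leG_N by exact HG.
  split; [|reflexivity].
  unfold qle; rewrite qoplus_cls_N, cls_N_eq by exact HG.
  split.
  - intros [Hor _]; apply prec_or_iff; assumption.
  - intro Hpp; split; [apply prec_or_iff; assumption|apply prec_orr; exact HG].
Qed.
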